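(* Let $(X,\mathscr{A},\mu)$ be a $\sigma$-finite measure space and $\phi$ a nonsingular transformation of $X$. If the composition operator $C_\phi$ is symmetric, then $C_\phi$ is selfadjoint and unitary, and $C_\phi^2=I$. If $C_\phi$ is positive and symmetric, then $C_\phi=I$.
   Context: Nonsingular: $\phi^{-1}(\Delta)\in\mathscr{A}$ for $\Delta\in\mathscr{A}$ and $\mu(\phi^{-1}(\Delta))=0$ whenever $\mu(\Delta)=0$. $C_\phi$ is the operator in $L^2(\mu)$ with $\mathcal{D}(C_\phi)=\{f\in L^2(\mu):f\circ\phi\in L^2(\mu)\}$, $C_\phi f=f\circ\phi$. A densely defined operator $A$ is symmetric if $A\subseteq A^*$; positive means $\langle Af,f\rangle\ge0$ for $f\in\mathcal{D}(A)$. *)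

From HB Require Import structures.
From mathcomp Require Import all_boot all_order all_algebra.
From mathcomp Require Import complex.
From mathcomp Require Import all_classical all_reals all_analysis.

Set Implicit Arguments.
Unset Strict Implicit.
Unset Printing Implicit Defensive.

Import Order.TTheory GRing.Theory Num.Theory.
Local Open Scope classical_set_scope.
Local Open Scope ring_scope.

Section L2space.
Context {d : measure_display} {T : measurableType d} {R : realType}
  (mu : {measure set T -> \bar R}).

Definition sqnorm (z : R[i]) : R := (complex.Re z) ^+ 2 + (complex.Im z) ^+ 2.

(* f is (a representative of) an element of the complex Hilbert space L^2(mu) *)
Definition L2 (f : T -> R[i]) : Prop :=
  [/\ measurable_fun setT (fun x => complex.Re (f x)),
      measurable_fun setT (fun x => complex.Im (f x)) &
      (\int[mu]_x (sqnorm (f x))%:E < +oo)%E].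

(* equality in L^2(mu): equality mu-almost everywhere *)
Definition ae_eq (f g : T -> R[i]) : Prop := {ae mu, forall x, f x = g x}.

Definition ip (f g : T -> R[i]) : R[i] :=
  Complex (Rintegral mu setT (fun x => complex.Re (f x * conjc (g x))))
          (Rintegral mu setT (fun x => complex.Im (f x * conjc (g x)))).

Definition sqnormL2 (f : T -> R[i]) : \bar R := (\int[mu]_x (sqnorm (f x))%:E)%E.

(* a (possibly unbounded) linear operator in L^2(mu), given on representatives:
   its domain and its action *)
Record operator := Operator {
  dom : (T -> R[i]) -> Prop ;
  app : (T -> R[i]) -> (T -> R[i]) }.

Definition densely_defined (A : operator) : Prop :=
  (forall f, dom A f -> L2 f) /\
  forall g, L2 g -> forall e : R, 0 < e ->
    exists f, dom A f /\ (sqnormL2 (fun x => (f x - g x)%R) < (e ^+ 2)%:E)%E.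

(* adj A g h  <->  g \in D(A^* ) and A^* g = h, i.e.
   <A f, g> = <f, h> for all f \in D(A) *)
Definition adj (A : operator) (g h : T -> R[i]) : Prop :=
  [/\ L2 g, L2 h & forall f, dom A f -> ip (app A f) g = ip f h].

Definition symmetric_op (A : operator) : Prop :=
  densely_defined A /\ forall f, dom A f -> adj A f (app A f).

Definition selfadjoint_op (A : operator) : Prop :=
  [/\ densely_defined A,
      (forall f, dom A f -> adj A f (app A f)) &
      (forall g h, adj A g h -> dom A g /\ ae_eq (app A g) h)].

(* <A f, f> >= 0 for f \in D(A) (order of the complex numbers) *)
Definition positive_op (A : operator) : Prop :=
  forall f, dom A f -> 0 <= ip (app A f) f.

(* A is a bounded everywhere defined operator with A^* A = A A^* = I *)
Definition unitary_op (A : operator) : Prop :=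
  [/\ (forall f, dom A f <-> L2 f),
      (exists c : R, forall f, L2 f -> (sqnormL2 (app A f) <= c%:E * sqnormL2 f)%E),
      (forall g, L2 g -> exists h, adj A g h),
      (forall f, L2 f -> adj A (app A f) f) &
      (forall g h, adj A g h -> ae_eq (app A h) g)].

(* A^2 = I (D(A^2) = {f \in D(A) : A f \in D(A)}) *)
Definition square_is_identity (A : operator) : Prop :=
  (forall f, (dom A f /\ dom A (app A f)) <-> L2 f) /\
  (forall f, L2 f -> ae_eq (app A (app A f)) f).

Definition is_identity (A : operator) : Prop :=
  (forall f, dom A f <-> L2 f) /\ (forall f, L2 f -> ae_eq (app A f) f).

Definition nonsingular (phi : T -> T) : Prop :=
  measurable_fun setT phi /\
  forall A, measurable A -> mu A = 0%E -> mu (phi @^-1` A) = 0%E.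

Definition C_op (phi : T -> T) : operator :=
  Operator (fun f => L2 f /\ L2 (f \o phi)) (fun f => f \o phi).

End L2space.

From Pilot Require Import Defs.
From HB Require Import structures.
From mathcomp Require Import all_boot all_order all_algebra.
From mathcomp Require Import complex.
From mathcomp Require Import all_classical all_reals all_analysis.
From mathcomp Require Import measurable_realfun.
From mathcomp Require Import ring lra.

(* Applied to indicator functions, the symmetry <C f, g> = <f, C g> says
   mu (phi^-1 B `&` A) = mu (B `&` phi^-1 A) whenever A, B and their preimages have
   finite measure.  Density of the domain of C_phi, sigma-finiteness and
   nonsingularity show that such sets exhaust X; letting A increase to X gives
   mu (phi^-1 B) = mu B, i.e. phi preserves mu.  Then C_phi is an isometry defined on
   all of L^2 and equal to its adjoint, so <C^2 f, f> = ||C f||^2 = ||f||^2 and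
   ||C^2 f - f||^2 = 0.  If moreover C_phi >= 0, then u = C f - f satisfies
   <C u, u> = <f - C f, u> = -||u||^2 >= 0, whence C f = f. *)

Import Order.TTheory GRing.Theory Num.Theory.
Local Open Scope classical_set_scope.
Local Open Scope ring_scope.

Section complex_facts.
Variable R : realType.
Implicit Types a b z : R[i].

Lemma complex_ext a b : complex.Re a = complex.Re b -> complex.Im a = complex.Im b -> a = b.
Proof. by case: a => ? ?; case: b => ? ? /= -> ->. Qed.

Lemma ReB a b : complex.Re (a - b) = complex.Re a - complex.Re b.
Proof. by case: a; case: b. Qed.

Lemma ImB a b : complex.Im (a - b) = complex.Im a - complex.Im b.
Proof. by case: a; case: b. Qed.

Lemma Re_mul_conjc a b :
  complex.Re (a * conjc b) = complex.Re a * complex.Re b + complex.Im a * complex.Im b.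
Proof. by case: a => ? ?; case: b => ? ? /=; ring. Qed.

Lemma Im_mul_conjc a b :
  complex.Im (a * conjc b) = complex.Im a * complex.Re b - complex.Re a * complex.Im b.
Proof. by case: a => ? ?; case: b => ? ? /=; ring. Qed.

Lemma sqnorm_ge0 z : 0 <= sqnorm z.
Proof. by rewrite /sqnorm addr_ge0 // sqr_ge0. Qed.

Lemma sqnorm_eq0 z : sqnorm z = 0 -> z = 0.
Proof.
case: z => a b; rewrite /sqnorm /= => /eqP.
by rewrite paddr_eq0 ?sqr_ge0 // !sqrf_eq0 => /andP[/eqP -> /eqP ->].
Qed.

Lemma normrM_le_sqrD (x y : R) : `|x * y| <= x ^+ 2 + y ^+ 2.
Proof.
rewrite normrM; have := sqr_ge0 (`|x| - `|y|).
rewrite sqrrB !real_normK ?num_real //.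
by have := normr_ge0 x; have := normr_ge0 y; nra.
Qed.

Lemma Re_mul_conjc_le a b : `|complex.Re (a * conjc b)| <= 2 * (sqnorm a + sqnorm b).
Proof.
rewrite Re_mul_conjc /sqnorm; apply: (le_trans (ler_normD _ _)).
have := normrM_le_sqrD (complex.Re a) (complex.Re b).
have := normrM_le_sqrD (complex.Im a) (complex.Im b).
by have := sqnorm_ge0 a; have := sqnorm_ge0 b; rewrite /sqnorm; lra.
Qed.

Lemma Im_mul_conjc_le a b : `|complex.Im (a * conjc b)| <= 2 * (sqnorm a + sqnorm b).
Proof.
rewrite Im_mul_conjc /sqnorm; apply: (le_trans (ler_normB _ _)).
have := normrM_le_sqrD (complex.Im a) (complex.Re b).
have := normrM_le_sqrD (complex.Re a) (complex.Im b).
by have := sqnorm_ge0 a; have := sqnorm_ge0 b; rewrite /sqnorm; lra.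
Qed.

Lemma sqnormB_le a b : sqnorm (a - b) <= 2 * (sqnorm a + sqnorm b).
Proof.
rewrite /sqnorm ReB ImB.
have := sqr_ge0 (complex.Re a + complex.Re b).
have := sqr_ge0 (complex.Im a + complex.Im b); nra.
Qed.

End complex_facts.

Section L2_space.
Context {d : measure_display} {T : measurableType d} {R : realType}
  (mu : {measure set T -> \bar R}).
Implicit Types (f g h u : T -> R[i]) (k : T -> R).

Lemma L2_measurable_Re {f} : L2 mu f -> measurable_fun setT (fun x => complex.Re (f x)).
Proof. by case. Qed.

Lemma L2_measurable_Im {f} : L2 mu f -> measurable_fun setT (fun x => complex.Im (f x)).
Proof. by case. Qed.

Lemma L2_measurable_sqnorm {f} : L2 mu f -> measurable_fun setT (fun x => sqnorm (f x)).
Proof.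
move=> Lf; apply: measurable_funD; apply: measurable_funX;
  [exact: L2_measurable_Re | exact: L2_measurable_Im].
Qed.

Lemma L2_measurable_Re_mul_conjc {f g} : L2 mu f -> L2 mu g ->
  measurable_fun setT (fun x => complex.Re (f x * conjc (g x))).
Proof.
move=> Lf Lg; under eq_fun do rewrite Re_mul_conjc.
by apply: measurable_funD; apply: measurable_funM;
  [exact: L2_measurable_Re | exact: L2_measurable_Re
  | exact: L2_measurable_Im | exact: L2_measurable_Im].
Qed.

Lemma L2_measurable_Im_mul_conjc {f g} : L2 mu f -> L2 mu g ->
  measurable_fun setT (fun x => complex.Im (f x * conjc (g x))).
Proof.
move=> Lf Lg; under eq_fun do rewrite Im_mul_conjc.
by apply: measurable_funB; apply: measurable_funM;
  [exact: L2_measurable_Im | exact: L2_measurable_Re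
  | exact: L2_measurable_Re | exact: L2_measurable_Im].
Qed.

Lemma sqnormL2_ge0 f : (0 <= sqnormL2 mu f)%E.
Proof. by apply: integral_ge0 => x _; rewrite lee_fin sqnorm_ge0. Qed.

Lemma integral_abs_sqnorm f :
  (\int[mu]_x `|(sqnorm (f x))%:E| = sqnormL2 mu f)%E.
Proof. by apply: eq_integral => x _; rewrite gee0_abs // lee_fin sqnorm_ge0. Qed.

Lemma L2P f : L2 mu f <->
  [/\ measurable_fun setT (fun x => complex.Re (f x)),
      measurable_fun setT (fun x => complex.Im (f x)) &
      mu.-integrable setT (EFin \o (fun x => sqnorm (f x)))].
Proof.
split=> [Lf|[mRe mIm /integrableP[_]]]; last by rewrite integral_abs_sqnorm.
split=> //; [exact: L2_measurable_Re | exact: L2_measurable_Im |].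
apply/integrableP; split; first exact/measurable_EFinP/L2_measurable_sqnorm.
by rewrite integral_abs_sqnorm; case: Lf.
Qed.

Lemma L2_integrable_sqnorm {f} : L2 mu f -> mu.-integrable setT (EFin \o (fun x => sqnorm (f x))).
Proof. by case/L2P. Qed.

Lemma L2_integrable_dominated {f g} k : L2 mu f -> L2 mu g -> measurable_fun setT k ->
  (forall x, `|k x| <= 2 * (sqnorm (f x) + sqnorm (g x))) ->
  mu.-integrable setT (EFin \o k).
Proof.
move=> Lf Lg mk k_le.
pose b x := sqnorm (f x) + sqnorm (g x).
have int_fg : mu.-integrable setT (fun x => 2%:E * (b x)%:E)%E.
  apply: integrableZl => //.
  exact: (integrableD _ (L2_integrable_sqnorm Lf) (L2_integrable_sqnorm Lg)).
apply: le_integrable int_fg => //; first exact/measurable_EFinP.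
move=> x _ /=; rewrite lee_fin; apply: (le_trans (k_le x)).
exact: ler_norm.
Qed.

Lemma L2_integrable_Re_mul_conjc {f g} : L2 mu f -> L2 mu g ->
  mu.-integrable setT (EFin \o (fun x => complex.Re (f x * conjc (g x)))).
Proof.
move=> Lf Lg; apply: (L2_integrable_dominated _ Lf Lg).
  exact: L2_measurable_Re_mul_conjc.
by move=> x; exact: Re_mul_conjc_le.
Qed.

Lemma L2_integrable_Im_mul_conjc {f g} : L2 mu f -> L2 mu g ->
  mu.-integrable setT (EFin \o (fun x => complex.Im (f x * conjc (g x)))).
Proof.
move=> Lf Lg; apply: (L2_integrable_dominated _ Lf Lg).
  exact: L2_measurable_Im_mul_conjc.
by move=> x; exact: Im_mul_conjc_le.
Qed.

Lemma L2B {f g} : L2 mu f -> L2 mu g -> L2 mu (f \- g).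
Proof.
move=> Lf Lg; apply/L2P; split.
- under eq_fun do rewrite ReB.
  by apply: measurable_funB; exact: L2_measurable_Re.
- under eq_fun do rewrite ImB.
  by apply: measurable_funB; exact: L2_measurable_Im.
apply: (L2_integrable_dominated _ Lf Lg).
- rewrite /sqnorm; under eq_fun do rewrite ReB ImB.
  by apply: measurable_funD; apply: measurable_funX; apply: measurable_funB;
    [exact: L2_measurable_Re | exact: L2_measurable_Re
    | exact: L2_measurable_Im | exact: L2_measurable_Im].
- by move=> x; rewrite ger0_norm ?sqnorm_ge0 // sqnormB_le.
Qed.

Lemma RintegralN k : mu.-integrable setT (EFin \o k) ->
  Rintegral mu setT (fun x => - k x) = - Rintegral mu setT k.
Proof.
move=> ik; under eq_Rintegral do rewrite -mulN1r.
by rewrite RintegralZl // mulN1r.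
Qed.

Lemma ipBl {f g h} : L2 mu f -> L2 mu g -> L2 mu h -> ip mu (f \- g) h = ip mu f h - ip mu g h.
Proof.
move=> Lf Lg Lh; apply: complex_ext; rewrite /ip /= ?ReB ?ImB -RintegralB //;
  try exact: L2_integrable_Re_mul_conjc; try exact: L2_integrable_Im_mul_conjc.
- by apply: eq_Rintegral => x _; rewrite mulrBl ReB.
- by apply: eq_Rintegral => x _; rewrite mulrBl ImB.
Qed.

Lemma ipBr {f g h} : L2 mu f -> L2 mu g -> L2 mu h -> ip mu h (f \- g) = ip mu h f - ip mu h g.
Proof.
move=> Lf Lg Lh; apply: complex_ext; rewrite /ip /= ?ReB ?ImB -RintegralB //;
  try exact: L2_integrable_Re_mul_conjc; try exact: L2_integrable_Im_mul_conjc.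
- by apply: eq_Rintegral => x _; rewrite rmorphB mulrBr ReB.
- by apply: eq_Rintegral => x _; rewrite rmorphB mulrBr ImB.
Qed.

Lemma ipxx f : ip mu f f = Complex (fine (sqnormL2 mu f)) 0.
Proof.
apply: complex_ext => /=.
- rewrite /Rintegral /sqnormL2; congr fine; apply: eq_integral => x _.
  by rewrite Re_mul_conjc /sqnorm !expr2.
- rewrite /Rintegral (_ : (fun x => _) = cst 0%E) ?integral0 //.
  by apply/funext => x; rewrite Im_mul_conjc /= mulrC subrr.
Qed.

Lemma ip_conjc {f g} : L2 mu f -> L2 mu g -> ip mu g f = conjc (ip mu f g).
Proof.
move=> Lf Lg; apply: complex_ext => /=.
- by apply: eq_Rintegral => x _; rewrite !Re_mul_conjc mulrC [X in _ + X]mulrC.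
- rewrite -RintegralN; last exact: L2_integrable_Im_mul_conjc.
  by apply: eq_Rintegral => x _; rewrite !Im_mul_conjc; ring.
Qed.

Lemma ip_ae_eql {f f' g} : L2 mu f -> L2 mu f' -> L2 mu g ->
  Defs.ae_eq mu f f' -> ip mu f g = ip mu f' g.
Proof.
move=> Lf Lf' Lg ff'; apply: complex_ext; rewrite /= /Rintegral; congr fine;
  apply: ae_eq_integral => //; try (apply/measurable_EFinP;
    (exact: L2_measurable_Re_mul_conjc || exact: L2_measurable_Im_mul_conjc));
  by apply: filterS ff' => x /= ->.
Qed.

Lemma ip_ae_eqr {f g g'} : L2 mu f -> L2 mu g -> L2 mu g' ->
  Defs.ae_eq mu g g' -> ip mu f g = ip mu f g'.
Proof.
move=> Lf Lg Lg' gg'.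
by rewrite (ip_conjc Lg Lf) (ip_conjc Lg' Lf) (ip_ae_eql Lg Lg' Lf gg').
Qed.

Lemma sqnormL2_eq0 {u} : L2 mu u -> sqnormL2 mu u = 0%E -> Defs.ae_eq mu u (fun=> 0).
Proof.
move=> Lu; rewrite -integral_abs_sqnorm => /ae_eq_integral_abs.
have m_sq := (measurable_EFinP _ _).2 (L2_measurable_sqnorm Lu).
move=> /(_ measurableT m_sq); apply: filterS => x /(_ I) [].
exact: sqnorm_eq0.
Qed.

Lemma ae_eq_ipBB0 {f g} : L2 mu f -> L2 mu g -> ip mu (f \- g) (f \- g) = 0 ->
  Defs.ae_eq mu f g.
Proof.
move=> Lf Lg; rewrite ipxx => /(congr1 (@complex.Re R)) /= fine0.
have Lfg := L2B Lf Lg.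
have fin : sqnormL2 mu (f \- g) \is a fin_num.
  by rewrite ge0_fin_numE ?sqnormL2_ge0 //; case: Lfg.
have /(sqnormL2_eq0 Lfg) : sqnormL2 mu (f \- g) = 0%E by rewrite -(fineK fin) fine0.
by apply: filterS => x /eqP; rewrite subr_eq0 => /eqP.
Qed.

Lemma measure_sub_lty A B : measurable A -> measurable B -> A `<=` B ->
  (mu B < +oo)%E -> (mu A < +oo)%E.
Proof. by move=> mA mB AB; apply: le_lt_trans; apply: le_measure; rewrite ?inE. Qed.

Definition indic_c (A : set T) : T -> R[i] := fun x => Complex (\1_A x) 0.

Lemma L2_indic_c A : measurable A -> (mu A < +oo)%E -> L2 mu (indic_c A).
Proof.
move=> mA muA; split=> /=; [exact: measurable_indic | exact: measurable_cst |].
rewrite (_ : (fun x => _) = (fun x => (\1_A x)%:E)) ?integral_indic ?setIT //.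
apply/funext => x; rewrite /sqnorm /= expr0n addr0 indicE.
by case: (x \in A); rewrite /= ?expr0n ?expr1n.
Qed.

Lemma Re_ip_indic_c A B : measurable A -> measurable B ->
  complex.Re (ip mu (indic_c A) (indic_c B)) = fine (mu (A `&` B)).
Proof.
move=> mA mB /=; rewrite /Rintegral; congr fine.
rewrite -[in RHS](setIT (A `&` B)) -integral_indic //; last exact: measurableI.
by apply: eq_integral => x _; rewrite /indic_c /= indicI /=; congr EFin; ring.
Qed.

Lemma sqnorm_superlevelE h (a : R) : [set x | a <= sqnorm (h x)] =
  setT `&` [set x | a%:E <= `|(EFin \o (fun x => sqnorm (h x))) x|]%E.
Proof.
rewrite setTI; apply: eq_set => x /=.
by rewrite ger0_norm ?sqnorm_ge0 // lee_fin.
Qed.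

Lemma measurable_sqnorm_superlevel {h} (a : R) : L2 mu h ->
  measurable [set x | a <= sqnorm (h x)].
Proof.
move=> Lh; rewrite sqnorm_superlevelE; apply: emeasurable_fun_c_infty => //.
exact/measurableT_comp/measurable_EFinP/L2_measurable_sqnorm.
Qed.

Lemma sqnorm_markov {h} (a : R) : L2 mu h -> 0 < a ->
  (a%:E * mu [set x | (a <= sqnorm (h x))%R] <= sqnormL2 mu h)%E.
Proof.
move=> Lh a0; rewrite sqnorm_superlevelE -integral_abs_sqnorm.
apply: le_integral_abse => //.
exact/measurable_EFinP/L2_measurable_sqnorm.
Qed.

Lemma sqnorm_superlevel_finite {h} (a : R) : L2 mu h -> 0 < a ->
  (mu [set x | (a <= sqnorm (h x))%R] < +oo)%E.
Proof.
move=> Lh a0; rewrite ltey; apply/negP => /eqP muS.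
have := sqnorm_markov a Lh a0; rewrite muS gt0_muley ?lte_fin // leye_eq => /eqP h_oo.
by case: Lh => _ _; rewrite -/(sqnormL2 mu h) h_oo.
Qed.

Lemma le_natSinv_le0 (x : R) : (forall j : nat, x <= (j.+1%:R)^-1) -> x <= 0.
Proof.
move=> x_le; apply/ler_addgt0Pr => e e0; rewrite add0r.
have [j _ /(_ j (leqnn j)) /= je] := near_infty_natSinv_lt (PosNum e0).
exact: le_trans (x_le j) (ltW je).
Qed.

(* Where every [|f j| < 1/2] on [F], every [|f j - 1_F| > 1/2]: by Chebyshev this
   set is null as soon as [f j] converges to [1_F] in L^2. *)
Lemma mu_setD_superlevels_eq0 (F : set T) (f : nat -> T -> R[i]) :
  measurable F -> (mu F < +oo)%E -> (forall j, L2 mu (f j)) ->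
  (forall j, (sqnormL2 mu (f j \- indic_c F)%R < ((j.+1%:R)^-1 ^+ 2)%:E)%E) ->
  mu (F `\` \bigcup_j [set x | 4^-1 <= sqnorm (f j x)]) = 0%E.
Proof.
move=> mF muF Lf f_close; set N := F `\` _.
have mN : measurable N.
  apply: measurableD => //; apply: bigcupT_measurable => j.
  exact: measurable_sqnorm_superlevel.
have N_fin : mu N \is a fin_num.
  by rewrite ge0_fin_numE //; apply: measure_sub_lty muF => // x [].
have N_small j : 4^-1 * fine (mu N) <= (j.+1%:R)^-1.
  have Lu := L2B (Lf j) (L2_indic_c _ mF muF).
  have N_sub : N `<=` [set x | 4^-1 <= sqnorm ((f j \- indic_c F) x)].
    move=> x [Fx notS]; have : sqnorm (f j x) < 4^-1.
      by rewrite ltNge; apply/negP => Sx; apply: notS; exists j.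
    rewrite /sqnorm /indic_c /= ReB ImB indicE mem_set //=.
    by have := sqr_ge0 (complex.Im (f j x)); nra.
  rewrite -lee_fin EFinM fineK //.
  have muN_le : (4^-1%:E * mu N <=
      4^-1%:E * mu [set x | (4^-1 <= sqnorm ((f j \- indic_c F) x))%R])%E.
    rewrite lee_pmul2l ?lte_fin ?invr_gt0 //; apply: le_measure N_sub; rewrite ?inE //.
    exact: measurable_sqnorm_superlevel.
  apply: (le_trans muN_le); apply: (le_trans (sqnorm_markov _ Lu _)).
    by rewrite invr_gt0.
  apply: (le_trans (ltW (f_close j))); rewrite lee_fin expr2 ler_piMl //.
  by rewrite invf_le1 // ler1n.
have := le_natSinv_le0 _ N_small; rewrite pmulr_rle0 ?invr_gt0 // => N_le0.
rewrite -(fineK N_fin); congr EFin; apply/eqP.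
by rewrite eq_le N_le0 fine_ge0.
Qed.

Definition exhausting (G : nat -> set T) :=
  [/\ forall n, measurable (G n), nondecreasing_seq G & \bigcup_n G n = setT].

Lemma cvg_mu_setI_exhausting {G E} : exhausting G -> measurable E ->
  (fun n => mu (E `&` G n)) @ \oo --> mu E.
Proof.
move=> [mG ndG GT] mE.
have -> : mu E = mu (\bigcup_n (E `&` G n)) by rewrite -setI_bigcupr GT setIT.
apply: (nondecreasing_cvg_mu (F := fun n => E `&` G n)).
- by move=> n; exact: measurableI.
- by apply: bigcupT_measurable => n; exact: measurableI.
- move=> m n mn; apply/subsetPset; apply: setIS.
  exact/subsetPset/ndG.
Qed.

Lemma eq_mu_exhausting {G G' E E'} : exhausting G -> exhausting G' ->
  measurable E -> measurable E' ->
  (forall n, mu (E `&` G n) = mu (E' `&` G' n)) -> mu E = mu E'.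
Proof.
move=> exG exG' mE mE' eqI.
rewrite -(cvg_lim _ (cvg_mu_setI_exhausting exG mE)) //.
rewrite -(cvg_lim _ (cvg_mu_setI_exhausting exG' mE')) //.
by congr lim; rewrite (funext eqI).
Qed.

Section composition.
Variable phi : T -> T.
Hypothesis mphi : measurable_fun setT phi.

Lemma measurable_preimage {A} : measurable A -> measurable (phi @^-1` A).
Proof. by move=> mA; rewrite -(setTI (phi @^-1` A)); exact: mphi. Qed.

Lemma exhausting_preimage {G} : exhausting G -> exhausting (fun n => phi @^-1` G n).
Proof.
case=> mG ndG GT; split=> [n|m n mn|]; first exact: measurable_preimage.
- by apply/subsetPset; apply: preimage_subset; exact/subsetPset/ndG.
- by rewrite -preimage_bigcup GT.
Qed.

Lemma indic_c_comp A : indic_c A \o phi = indic_c (phi @^-1` A).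
Proof. by apply/funext => x; rewrite /indic_c /= !indicE. Qed.

Section measure_preserving.
Hypothesis mu_preimage : forall A, measurable A -> mu (phi @^-1` A) = mu A.

Lemma integral_comp_ge0 k : measurable_fun setT k -> (forall x, 0 <= k x) ->
  (\int[mu]_x (k (phi x))%:E = \int[mu]_x (k x)%:E)%E.
Proof.
move=> mk k_ge0.
have := ge0_integral_pushforward mphi mu (D := setT) (f := EFin \o k) measurableT.
rewrite preimage_setT => <-; last by move=> y _; rewrite lee_fin.
  by apply: eq_measure_integral => A mA _ /=; rewrite /pushforward mu_preimage.
exact/measurable_EFinP.
Qed.

Lemma sqnormL2_comp {f} : L2 mu f -> sqnormL2 mu (f \o phi) = sqnormL2 mu f.
Proof.
move=> Lf; rewrite /sqnormL2 (integral_comp_ge0 (fun x => sqnorm (f x))) //.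
- exact: L2_measurable_sqnorm.
- by move=> x; exact: sqnorm_ge0.
Qed.

Lemma L2_comp {f} : L2 mu f -> L2 mu (f \o phi).
Proof.
move=> Lf; split; [exact: measurableT_comp (L2_measurable_Re Lf) mphi
  | exact: measurableT_comp (L2_measurable_Im Lf) mphi |].
by rewrite -/(sqnormL2 mu (f \o phi)) sqnormL2_comp //; case: Lf.
Qed.

Lemma ae_eq_comp {f g} : Defs.ae_eq mu f g -> Defs.ae_eq mu (f \o phi) (g \o phi).
Proof.
case=> N [mN N0 fgN]; exists (phi @^-1` N); split.
- exact: measurable_preimage.
- by rewrite mu_preimage.
- by move=> x /= fgx; apply: fgN.
Qed.

Lemma dom_C f : dom (C_op mu phi) f <-> L2 mu f.
Proof. by split=> [[]//|Lf]; split=> //; exact: L2_comp. Qed.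

Section symmetric.
Hypothesis ip_C_sym : forall f g, L2 mu f -> L2 mu g ->
  ip mu (g \o phi) f = ip mu g (f \o phi).

Lemma adj_C_comp f : L2 mu f -> adj mu (C_op mu phi) f (f \o phi).
Proof.
move=> Lf; split=> //; first exact: L2_comp.
by move=> g [Lg _]; exact: ip_C_sym.
Qed.

Lemma comp_comp_ae_eq {f} : L2 mu f -> Defs.ae_eq mu (f \o phi \o phi) f.
Proof.
move=> Lf; have Lf1 := L2_comp Lf; have Lf2 := L2_comp Lf1.
apply: ae_eq_ipBB0 => //; rewrite ipBl ?ipBr //; try exact: L2B.
have norm2 : ip mu (f \o phi \o phi) (f \o phi \o phi) = ip mu f f.
  by rewrite !ipxx !sqnormL2_comp.
have ipC2l : ip mu (f \o phi \o phi) f = ip mu f f.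
  by rewrite (ip_C_sym _ _ Lf Lf1) !ipxx sqnormL2_comp.
have ipC2r : ip mu f (f \o phi \o phi) = ip mu f f.
  by rewrite (ip_conjc Lf2 Lf) ipC2l ipxx; apply: complex_ext => /=; rewrite ?oppr0.
by rewrite norm2 ipC2l ipC2r !subrr.
Qed.

Lemma adj_C_ae_eq {g h} : adj mu (C_op mu phi) g h -> Defs.ae_eq mu (g \o phi) h.
Proof.
case=> Lg Lh adj_gh; have Lg1 := L2_comp Lg; have Lu := L2B Lg1 Lh.
apply: ae_eq_ipBB0 => //; rewrite ipBr //.
by rewrite -(adj_gh _ ((dom_C _).2 Lu)) /= (ip_C_sym _ _ Lg Lu) subrr.
Qed.

Lemma C_selfadjoint : densely_defined mu (C_op mu phi) -> selfadjoint_op mu (C_op mu phi).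
Proof.
move=> C_dd; split=> // [f /dom_C|g h adj_gh]; first exact: adj_C_comp.
split; last exact: adj_C_ae_eq.
by apply/dom_C; case: adj_gh.
Qed.

Lemma C_unitary : unitary_op mu (C_op mu phi).
Proof.
split.
- exact: dom_C.
- by exists 1 => f Lf; rewrite mul1e sqnormL2_comp.
- by move=> g Lg; exists (g \o phi); exact: adj_C_comp.
- move=> f Lf; have Lf1 := L2_comp Lf; split=> // g [Lg _] /=.
  rewrite (ip_C_sym _ _ Lf1 Lg); apply: ip_ae_eqr => //; first exact: L2_comp.
  exact: comp_comp_ae_eq.
- move=> g h adj_gh; have [Lg _ _] := adj_gh.
  move: (ae_eq_comp (adj_C_ae_eq adj_gh)) (comp_comp_ae_eq Lg).
  by apply: filterS2 => x /= <-.
Qed.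

Lemma C_square_is_identity : square_is_identity mu (C_op mu phi).
Proof.
split=> [f|f Lf]; last exact: comp_comp_ae_eq.
split=> [[/dom_C //]|Lf]; split; apply/dom_C => //; exact: L2_comp.
Qed.

Lemma C_positive_is_identity : positive_op mu (C_op mu phi) -> is_identity mu (C_op mu phi).
Proof.
move=> C_pos; split=> [f|f Lf]; first exact: dom_C.
have Lf1 := L2_comp Lf; have Lf2 := L2_comp Lf1; have Lu := L2B Lf1 Lf.
have ip_Cu : ip mu ((f \o phi \- f) \o phi) (f \o phi \- f) =
    - ip mu (f \o phi \- f) (f \o phi \- f).
  rewrite (@ipBl (f \o phi \o phi) (f \o phi)) //.
  by rewrite (ip_ae_eql Lf2 Lf Lu (comp_comp_ae_eq Lf)) ipBl // opprB.
have := C_pos _ ((dom_C _).2 Lu).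
rewrite /= ip_Cu ipxx lecE /= oppr0 eqxx /= oppr_ge0 => u_le0.
apply: ae_eq_ipBB0 => //; rewrite ipxx; apply: complex_ext => //=.
by apply/eqP; rewrite eq_le u_le0 fine_ge0 // sqnormL2_ge0.
Qed.

End symmetric.
End measure_preserving.

Section symmetric_preserves_measure.
Hypothesis phi_null : forall A, measurable A -> mu A = 0%E -> mu (phi @^-1` A) = 0%E.
Hypothesis C_sym : symmetric_op mu (C_op mu phi).
Hypothesis mu_sigma_finite : sigma_finite setT mu.

Definition bifinite (A : set T) :=
  [/\ measurable A, (mu A < +oo)%E & (mu (phi @^-1` A) < +oo)%E].

Lemma bifinite0 : bifinite set0.
Proof. by split; rewrite ?preimage_set0 ?measure0. Qed.

Lemma bifiniteU A B : bifinite A -> bifinite B -> bifinite (A `|` B).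
Proof.
case=> mA muA muA'; case=> mB muB muB'; split; first exact: measurableU.
- by apply: le_lt_trans (measureU2 mu mA mB) _; exact: lte_add_pinfty.
- rewrite preimage_setU.
  apply: le_lt_trans (measureU2 mu (measurable_preimage mA) (measurable_preimage mB)) _.
  exact: lte_add_pinfty.
Qed.

Lemma bifiniteIl A B : measurable A -> bifinite B -> bifinite (A `&` B).
Proof.
move=> mA [mB muB muB']; have mAB := measurableI _ _ mA mB; split=> //.
- exact: measure_sub_lty mAB mB (@subIsetr _ _ _) muB.
- apply: measure_sub_lty muB'; try exact: measurable_preimage.
  by apply: preimage_subset; exact: subIsetr.
Qed.

Lemma bifinite_bigcup_ord n (Q : nat -> set T) :
  (forall i, (i < n)%N -> bifinite (Q i)) -> bifinite (\bigcup_(i < n) Q i).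
Proof.
move=> bQ; rewrite bigcup_mkord.
by apply: big_ind => [|A B|i _]; [exact: bifinite0 | exact: bifiniteU | exact: bQ].
Qed.

Lemma mu_preimageI_swap A B : bifinite A -> bifinite B ->
  mu (phi @^-1` B `&` A) = mu (B `&` phi @^-1` A).
Proof.
move=> bA bB; have [mA muA _] := bA; have [mB muB _] := bB.
have mA' := measurable_preimage mA; have mB' := measurable_preimage mB.
have C_indic E : bifinite E -> dom (C_op mu phi) (indic_c E).
  case=> mE muE muE'; split; first exact: L2_indic_c.
  by rewrite indic_c_comp; exact: L2_indic_c (measurable_preimage mE) muE'.
have [_ _ adjA] := C_sym.2 _ (C_indic _ bA).
move: (adjA _ (C_indic _ bB)) => /= /(congr1 (@complex.Re R)).
rewrite !indic_c_comp !Re_ip_indic_c //.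
have fin1 : mu (phi @^-1` B `&` A) \is a fin_num.
  rewrite ge0_fin_numE //; apply: measure_sub_lty muA => //; exact: measurableI.
have fin2 : mu (B `&` phi @^-1` A) \is a fin_num.
  rewrite ge0_fin_numE //; apply: measure_sub_lty muB => //; exact: measurableI.
by move=> e; rewrite -(fineK fin1) -(fineK fin2) e.
Qed.

(* [f (i, j)] lies in the domain of C_phi and is 1/(j+1)-close to [1_(F i)];
   Chebyshev for [f (i, j)] and [f (i, j) \o phi] makes [|f (i, j)| >= 1/2] bifinite,
   and these sets cover [F i] up to a null set. *)
Lemma bifinite_cover : exists Q : nat -> nat -> set T,
  (forall i j, bifinite (Q i j)) /\ \bigcup_i \bigcup_j Q i j = setT.
Proof.
have [F FT mF] := mu_sigma_finite; have [_ C_dense] := C_sym.1.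
have LF i : L2 mu (indic_c (F i)) by case: (mF i) => ? ?; exact: L2_indic_c.
have natSinv_gt0 j : 0 < (j.+1%:R : R)^-1 by rewrite invr_gt0 ltr0n.
have [f f_close] :=
  choice (fun p : nat * nat => C_dense _ (LF p.1) _ (natSinv_gt0 p.2)).
pose S i j := [set x | 4^-1 <= sqnorm (f (i, j) x)].
pose N i := F i `\` \bigcup_j S i j.
have a_gt0 : (0 : R) < 4^-1 by rewrite invr_gt0.
have bS i j : bifinite (S i j).
  have [[Lf Lf1] _] := f_close (i, j); split.
  - exact: measurable_sqnorm_superlevel.
  - exact: sqnorm_superlevel_finite.
  - exact: (sqnorm_superlevel_finite _ Lf1).
have bN i : bifinite (N i).
  have [mFi muFi] := mF i.
  have mN : measurable (N i).
    by apply: measurableD => //; apply: bigcupT_measurable => j; case: (bS i j).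
  have N0 : mu (N i) = 0%E.
    apply: mu_setD_superlevels_eq0 => // j; by have [[]] := f_close (i, j).
  by split=> //; rewrite ?phi_null ?N0.
exists (fun i j => N i `|` S i j); split=> [i j|]; first exact: bifiniteU.
apply/seteqP; split=> // x _; have [i _ Fix] : (\bigcup_i F i) x by rewrite -FT.
exists i => //; have [[j _ Sx]|notS] := pselect ((\bigcup_j S i j) x).
- by exists j => //; right.
- by exists 0%N => //; left.
Qed.

Lemma bifinite_exhaustion : exists G : nat -> set T,
  exhausting G /\ forall n, bifinite (G n).
Proof.
have [Q [bQ QT]] := bifinite_cover.
pose G n := \bigcup_(i < n) \bigcup_(j < n) Q i j.
have bG n : bifinite (G n).
  by apply: bifinite_bigcup_ord => i _; exact: bifinite_bigcup_ord.
exists G; split=> //; split=> [n|m n mn|]; first by case: (bG n).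
- apply/subsetPset => x [i /= im [j /= jm Qx]].
  by exists i; [exact: leq_trans mn | exists j => //; exact: leq_trans mn].
- rewrite -QT; apply/seteqP; split=> x.
  + by case=> n _ [i _ [j _ Qx]]; exists i => //; exists j.
  + case=> i _ [j _ Qx]; exists (maxn i j).+1 => //.
    by exists i; rewrite /= ?ltnS ?leq_maxl //; exists j; rewrite /= ?ltnS ?leq_maxr.
Qed.

Lemma mu_preimage_bifinite B : bifinite B -> mu (phi @^-1` B) = mu B.
Proof.
move=> bB; have [G [exG bG]] := bifinite_exhaustion; have [mB _ _] := bB.
apply: (eq_mu_exhausting exG (exhausting_preimage exG)) => //.
  exact: measurable_preimage.
by move=> n; exact: mu_preimageI_swap.
Qed.

Lemma symmetric_C_mu_preimage A : measurable A -> mu (phi @^-1` A) = mu A.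
Proof.
move=> mA; have [G [exG bG]] := bifinite_exhaustion.
apply: (eq_mu_exhausting (exhausting_preimage exG) exG) => //.
  exact: measurable_preimage.
by move=> n; rewrite -preimage_setI mu_preimage_bifinite //; exact: bifiniteIl.
Qed.

Lemma symmetric_C_ip_comp f g : L2 mu f -> L2 mu g ->
  ip mu (g \o phi) f = ip mu g (f \o phi).
Proof.
move=> Lf Lg; have dom_C' := dom_C symmetric_C_mu_preimage.
by have [_ _] := C_sym.2 f ((dom_C' f).2 Lf); apply; apply/dom_C'.
Qed.

End symmetric_preserves_measure.
End composition.
End L2_space.

Theorem propositionB1 (d : measure_display) (T : measurableType d)
  (R : realType) (mu : {measure set T -> \bar R}) (phi : T -> T) :
  sigma_finite setT mu -> nonsingular mu phi ->
  (symmetric_op mu (C_op mu phi) ->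
     [/\ selfadjoint_op mu (C_op mu phi), unitary_op mu (C_op mu phi) &
         square_is_identity mu (C_op mu phi)]) /\
  (positive_op mu (C_op mu phi) -> symmetric_op mu (C_op mu phi) ->
     is_identity mu (C_op mu phi)).
Proof.
move=> mu_sf [mphi phi_null].
split=> [C_sym | C_pos C_sym];
  have mu_preimage := symmetric_C_mu_preimage mu phi mphi phi_null C_sym mu_sf;
  have ip_C_sym := symmetric_C_ip_comp mu phi mphi phi_null C_sym mu_sf.
- split; first exact: C_selfadjoint mu phi mphi mu_preimage ip_C_sym C_sym.1.
  + exact: C_unitary mu phi mphi mu_preimage ip_C_sym.
  + exact: C_square_is_identity mu phi mphi mu_preimage ip_C_sym.
- exact: C_positive_is_identity mu phi mphi mu_preimage ip_C_sym C_pos.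
Qed.
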